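(* Let $\rho$ be a state on $S$ and $\rho'$ a state on $S'$. Suppose either (1) $\mathcal{C}(\rho')\not\subseteq\mathcal{C}(\rho)$, or (2) $\rho'$ is a pure coherent state (i.e., $\rho'$ is pure and not invariant under $e^{-iH_{S'}t}(\cdot)e^{iH_{S'}t}$ for some $t$) and $\rho$ is full rank. Then there is no integer $n\ge1$ and no covariant operation $\Lambda:S^{\otimes n}\to S'$ with $\Lambda(\rho^{\otimes n})=\rho'$. Consequently $\tilde R^0(\rho\to\rho')=0$.
   Context: All systems are finite-dimensional with Hamiltonians; composites carry the sum Hamiltonian. A channel $\Lambda:X\to Y$ is covariant if $\Lambda(e^{-iH_Xt}\sigma e^{iH_Xt})=e^{-iH_Yt}\Lambda(\sigma)e^{iH_Yt}$ for all $\sigma,t$. With $H_X=\sum_kE_k\Pi_k$ (distinct eigenvalues), $\mathcal{D}(\sigma)=\{E_k-E_l:\Pi_k\sigma\Pi_l\ne0\}$ and $\mathcal{C}(\sigma)$ is the set of finite integer linear combinations of elements of $\mathcal{D}(\sigma)$. $\tilde R^0(\rho\to\rho')=\limsup_{n\to\infty}\sup\{r:\exists$ covariant $\Lambda_n:S^{\otimes n}\to S'^{\otimes\lfloor rn\rfloor}$ whose output has every single-copy marginal equal to $\rho'\}$. *)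

From HB Require Import structures.
From mathcomp Require Import all_boot all_order all_algebra.
From mathcomp Require Import all_classical all_reals.
From mathcomp Require Import ereal topology normedtype sequences exp trigo.
From mathcomp Require Import complex.

Set Implicit Arguments.
Unset Strict Implicit.
Unset Printing Implicit Defensive.

Import Order.TTheory GRing.Theory Num.Theory.
Local Open Scope ring_scope.
Local Open Scope classical_set_scope.

(* A finite-dimensional quantum system, written in an energy eigenbasis:     *)
Record system (R : realType) := Sys {
  sidx : finType;
  energy : sidx -> R }.

Definition op (R : realType) (S : system R) := sidx S -> sidx S -> R[i].

Definition expi (R : realType) (x : R) : R[i] := Complex (cos x) (sin x).

(* e^{-i H t} sigma e^{i H t}, entrywise in the energy eigenbasis:
   (a,b) entry = e^{-i E_a t} sigma_ab e^{i E_b t}. *)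
Definition evolve (R : realType) (S : system R) (t : R) (sigma : op S) : op S :=
  fun a b => expi (- (energy a * t)) * sigma a b * expi (energy b * t).

Definition is_state (R : realType) (S : system R) (sigma : op S) : Prop :=
  [/\ (forall a b, sigma b a = (sigma a b)^*),
      (forall v : sidx S -> R[i],
          0 <= \sum_a \sum_b (v a)^* * sigma a b * v b)
    & \sum_a sigma a a = 1].

Definition is_pure (R : realType) (S : system R) (sigma : op S) : Prop :=
  exists psi : sidx S -> R[i], sigma = fun a b => psi a * (psi b)^*.

Definition coherent (R : realType) (S : system R) (sigma : op S) : Prop :=
  exists t : R, evolve t sigma <> sigma.

Definition full_rank (R : realType) (S : system R) (sigma : op S) : Prop :=
  forall v : sidx S -> R[i], (forall a, \sum_b sigma a b * v b = 0) -> v = (fun _ => 0).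

(* D(sigma) = {E_k - E_l : Pi_k sigma Pi_l <> 0}; in the eigenbasis
   Pi_k sigma Pi_l <> 0 iff sigma a b <> 0 for some a, b with energies E_k, E_l. *)
Definition Dset (R : realType) (S : system R) (sigma : op S) : set R :=
  [set x | exists a b, sigma a b <> 0 /\ x = energy a - energy b].

Definition Cset (R : realType) (S : system R) (sigma : op S) : set R :=
  [set x | exists s : seq (int * R),
      (forall p, p \in s -> Dset sigma p.2) /\
      x = \sum_(p <- s) p.1%:~R * p.2].

Definition is_channel (R : realType) (X Y : system R) (L : op X -> op Y) : Prop :=
  exists (m : nat) (K : 'I_m -> sidx Y -> sidx X -> R[i]),
    (forall a b : sidx X,
        \sum_(k < m) \sum_(c : sidx Y) (K k c a)^* * K k c b = (a == b)%:R) /\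
    (forall sigma : op X, L sigma =
        fun c d => \sum_(k < m) \sum_(a : sidx X) \sum_(b : sidx X)
                     K k c a * sigma a b * (K k d b)^*).

Definition covariant (R : realType) (X Y : system R) (L : op X -> op Y) : Prop :=
  forall (sigma : op X) (t : R), L (evolve t sigma) = evolve t (L sigma).

Definition tens (R : realType) (S : system R) (n : nat) : system R :=
  @Sys R {ffun 'I_n -> sidx S} (fun x => \sum_(i < n) energy (x i)).

Definition tpow (R : realType) (S : system R) (n : nat) (sigma : op S)
  : op (tens S n) :=
  fun x y => \prod_(i < n) sigma (x i) (y i).
Arguments tpow {R S} n sigma.

(* Single-copy marginal on copy j (partial trace over all other copies). *)
Definition marginal (R : realType) (S : system R) (n : nat) (j : 'I_n)
    (omega : op (tens S n)) : op S :=
  fun a b => \sum_(x : {ffun 'I_n -> sidx S} | x j == a)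
             \sum_(y : {ffun 'I_n -> sidx S} |
                     (y j == b) && [forall i, (i != j) ==> (x i == y i)])
               omega x y.

Definition achievable (R : realType) (S S' : system R) (rho : op S) (rho' : op S')
    (n : nat) (r : R) : Prop :=
  0 <= r /\
  exists L : op (tens S n) -> op (tens S' (Num.truncn (r * n%:R))),
    [/\ is_channel L, covariant L
      & forall j : 'I_(Num.truncn (r * n%:R)), marginal j (L (tpow n rho)) = rho'].

Definition rate0 (R : realType) (S S' : system R) (rho : op S) (rho' : op S')
  : \bar R :=
  limn_esup (fun n => ereal_sup [set r%:E | r in achievable rho rho' n]).

(* A covariant channel only moves weight between matrix entries with equal
   Bohr frequencies E_a - E_b, and so does each single-copy marginal of its
   output.  Hence every mode of Lambda(rho^{(x) n}) is a sum of modes of rho,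
   which rules out (1).  In case (2), rho^{(x) n} >= lam Id for some lam > 0,
   so lam Lambda(Id) <= rho'; a positive operator dominated by the pure state
   rho' is a multiple k rho', and k > 0 by trace preservation.  The identity is
   time invariant and Lambda is covariant, so k rho', hence rho', is time
   invariant, contradicting coherence.  Applied to the marginal of an achieving
   channel, this forces floor(r n) = 0, i.e. r < 1/n, at every blocklength n,
   so the limsup vanishes. *)

From HB Require Import structures.
From mathcomp Require Import all_boot all_order all_algebra.
From mathcomp Require Import all_classical all_reals.
From mathcomp Require Import ereal topology normedtype sequences exp trigo.
From mathcomp Require Import complex.
From mathcomp Require Import ring lra sesquilinear spectral.

Import Order.TTheory GRing.Theory Num.Theory.
Local Open Scope ring_scope.
Local Open Scope classical_set_scope.

Set Implicit Arguments.
Unset Strict Implicit.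
Unset Printing Implicit Defensive.

Section Phases.
Variable R : realType.

Lemma expiD (x y : R) : expi x * expi y = expi (x + y).
Proof. by rewrite /expi cosD sinD; simpc; congr Complex; ring. Qed.

Lemma expi0 : expi (0 : R) = 1.
Proof. by rewrite /expi cos0 sin0. Qed.

Lemma expi_freq_inj (w1 w2 : R) :
  (forall t, expi (w1 * t) = expi (w2 * t)) -> w1 = w2.
Proof.
move=> h; apply/eqP; rewrite -subr_eq0; apply/negP => /negP nz.
set t := pi / 2 / (w1 - w2).
have := congr1 (fun z => z * expi (- (w2 * t))) (h t).
rewrite !expiD subrr expi0 -mulNr -mulrDl /t mulrCA divff // mulr1.
by rewrite /expi sin_pihalf => -[_] /eqP; rewrite oner_eq0.
Qed.

Lemma evolveE (S : system R) t (sigma : op S) a b :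
  evolve t sigma a b = expi (- ((energy a - energy b) * t)) * sigma a b.
Proof. by rewrite /evolve mulrAC expiD; congr (expi _ * _); ring. Qed.

End Phases.

Lemma sum_neq0P (V : nmodType) (T : finType) (P : pred T) (F : T -> V) :
  \sum_(a | P a) F a != 0 -> exists2 a, P a & F a != 0.
Proof.
apply: contraNP => /forall2NP h; apply/eqP/big1 => a Pa.
by have [//|/negP/negbNE/eqP] := h a.
Qed.

Lemma sum_delta (K : pzSemiRingType) (T : finType) (u : T) (F : T -> K) :
  \sum_x (x == u)%:R * F x = F u.
Proof.
rewrite (bigD1 u) //= [X in _ + X]big1 ?addr0; first by rewrite eqxx mul1r.
by move=> x /negbTE ->; rewrite mul0r.
Qed.

Lemma natr_andb (K : pzSemiRingType) (b1 b2 : bool) :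
  (b1 && b2)%:R = b1%:R * b2%:R :> K.
Proof. by case: b1; case: b2; rewrite ?mul1r ?mul0r. Qed.

Lemma ffun_eq_prod (K : comPzSemiRingType) (T : finType) n (x y : {ffun 'I_n -> T}) :
  (x == y)%:R = \prod_i (x i == y i)%:R :> K.
Proof.
have [->|/eqP ne] := eqVneq x y; first by rewrite big1 // => i _; rewrite eqxx.
have [i hi] : exists i, x i != y i.
  apply/existsP; apply: contra_notT ne => /existsPn h.
  by apply/ffunP => i; apply/eqP/negPn.
by rewrite (bigD1 i) //= (negbTE hi) mul0r.
Qed.

Section QuadraticForms.
Variable R : realType.
Local Notation C := R[i].

Lemma quad_ge0_lin_coef0 (c g : R) :
  0 <= g -> (forall s, 0 <= s * c + s ^+ 2 * g) -> c = 0.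
Proof.
move=> g0 H; have d0 : 0 < g + 1 by lra.
have := H (- c / (g + 1)).
have -> : (- c / (g + 1)) * c + (- c / (g + 1)) ^+ 2 * g = - (c ^+ 2) / (g + 1) ^+ 2.
  by field; lra.
rewrite -mulNr pmulr_lge0 ?invr_gt0 ?exprn_gt0 // => h.
by apply/eqP; rewrite -sqrf_eq0; apply/eqP; nra.
Qed.

Lemma quadC_ge0_lin_coef0 (al be ga : C) : 0 <= ga ->
  (forall t, 0 <= t^* * al + t * be + t * t^* * ga) -> al = 0 /\ be = 0.
Proof.
case: al => a1 a2; case: be => b1 b2; case: ga => g1 g2.
rewrite lecE /= => /andP[/eqP g20 g10] H.
have re s : 0 <= s * (a1 + b1) + s ^+ 2 * g1 /\ s * (a2 + b2) = 0.
  have := H (s +i* 0)%C; rewrite /= lecE /= => /andP[/eqP h1 h2].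
  by rewrite g20 expr2 in h1 h2 *; split; nra.
have im s : 0 <= s * (a2 - b2) + s ^+ 2 * g1 /\ s * (b1 - a1) = 0.
  have := H (0 +i* s)%C; rewrite /= lecE /= => /andP[/eqP h1 h2].
  by rewrite g20 expr2 in h1 h2 *; split; nra.
have q1 := quad_ge0_lin_coef0 g10 (fun s => (re s).1).
have q2 := quad_ge0_lin_coef0 g10 (fun s => (im s).1).
have := (re 1).2; have := (im 1).2; rewrite !mul1r => r2 r1.
have [-> ->] : a1 = 0 /\ b1 = 0 by split; lra.
by have [-> ->] : a2 = 0 /\ b2 = 0 by split; lra.
Qed.

Definition qf (T : finType) (v w : T -> C) (A : T -> T -> C) :=
  \sum_a \sum_b (v a)^* * A a b * w b.

Definition psd (T : finType) (A : T -> T -> C) := forall v, 0 <= qf v v A.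

Definition id_op (T : finType) (x y : T) : C := (x == y)%:R.

Section Generic.
Variable T : finType.
Implicit Types (A B : T -> T -> C) (v w : T -> C).

Lemma qfE v w A : qf v w A = \sum_a (v a)^* * \sum_b A a b * w b.
Proof.
by apply: eq_bigr => a _; rewrite mulr_sumr; apply: eq_bigr => b _; rewrite mulrA.
Qed.

Lemma qf_subZ v A B l :
  qf v v (fun x y => A x y - l * B x y) = qf v v A - l * qf v v B.
Proof.
rewrite /qf mulr_sumr -sumrB; apply: eq_bigr => a _.
by rewrite mulr_sumr -sumrB; apply: eq_bigr => b _; ring.
Qed.

Lemma qf_delta_l v A b : qf (fun a => (a == b)%:R) v A = \sum_d A b d * v d.
Proof.
rewrite qfE (bigD1 b) //= [X in _ + X]big1 ?addr0.
  by rewrite eqxx mulr1n conjC1 mul1r.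
by move=> a /negbTE ->; rewrite conjC0 mul0r.
Qed.

Lemma qf_delta_r v A b : qf v (fun a => (a == b)%:R) A = \sum_c (v c)^* * A c b.
Proof.
apply: eq_bigr => c _; rewrite (bigD1 b) //= [X in _ + X]big1 ?addr0.
  by rewrite eqxx mulr1n mulr1.
by move=> d /negbTE ->; rewrite mulr0.
Qed.

Lemma qf_shift A v w t :
  qf (fun a => v a + t * w a) (fun a => v a + t * w a) A =
  qf v v A + t^* * qf w v A + t * qf v w A + t * t^* * qf w w A.
Proof.
rewrite /qf !mulr_sumr -!big_split /=; apply: eq_bigr => a _.
rewrite !mulr_sumr -!big_split /=; apply: eq_bigr => b _.
by rewrite rmorphD rmorphM /=; ring.
Qed.

Lemma psd_kernel A v : psd A -> qf v v A = 0 ->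
  forall w, qf w v A = 0 /\ qf v w A = 0.
Proof.
move=> pA q0 w; apply: (quadC_ge0_lin_coef0 (pA w)) => t.
by have := pA (fun a => v a + t * w a); rewrite qf_shift q0 add0r.
Qed.

Lemma psd_sum_rank1 (J : finType) A (c : J -> C) (z : J -> T -> C) :
  (forall j, 0 <= c j) -> (forall x y, A x y = \sum_j c j * z j x * (z j y)^*) ->
  psd A.
Proof.
move=> c0 hA v.
have -> : qf v v A = \sum_j c j * ((\sum_x (v x)^* * z j x) * (\sum_x (v x)^* * z j x)^*).
  transitivity (\sum_x \sum_y \sum_j c j * ((v x)^* * z j x * ((v y)^* * z j y)^*)).
    apply: eq_bigr => x _; apply: eq_bigr => y _.
    rewrite hA mulr_sumr mulr_suml; apply: eq_bigr => j _.
    by rewrite rmorphM /= conjCK; ring.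
  under eq_bigr do rewrite exchange_big /=.
  rewrite exchange_big /=; apply: eq_bigr => j _.
  rewrite rmorph_sum /= big_distrlr /= mulr_sumr.
  by apply: eq_bigr => x _; rewrite mulr_sumr.
by apply: sumr_ge0 => j _; apply: mulr_ge0 => //; apply: mul_conjC_ge0.
Qed.

Lemma psd_id : psd (id_op (T := T)).
Proof.
apply: (@psd_sum_rank1 T _ (fun _ => 1) (fun j x => (j == x)%:R)) => // x y.
rewrite (bigD1 x) //= [X in _ + X]big1 ?addr0.
  by rewrite /id_op eqxx mul1r mul1r rmorph_nat.
by move=> j /negbTE ->; rewrite mulr0 mul0r.
Qed.

End Generic.
End QuadraticForms.

Arguments id_op {R T} x y.

Section Modes.
Variable R : realType.
Implicit Types S X Y : system R.

Definition preserves_modes X Y (F : op X -> op Y) :=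
  forall sigma, Dset (F sigma) `<=` Dset sigma.

Lemma Cset0 S (s : op S) : Cset s 0.
Proof. by exists [::]; rewrite big_nil. Qed.

Lemma CsetD S (s : op S) x y : Cset s x -> Cset s y -> Cset s (x + y).
Proof.
move=> [l1 [h1 ->]] [l2 [h2 ->]]; exists (l1 ++ l2); rewrite big_cat; split=> // p.
by rewrite mem_cat => /orP[]; [apply: h1 | apply: h2].
Qed.

Lemma CsetMz S (s : op S) (z : int) x : Cset s x -> Cset s (z%:~R * x).
Proof.
move=> [l [hl ->]]; exists [seq (z * p.1, p.2) | p <- l]; split.
  by move=> p /mapP[q ql ->]; apply: (hl q).
by rewrite big_map mulr_sumr; apply: eq_bigr => p _; rewrite intrM mulrA.
Qed.

Lemma Cset_sum S (s : op S) (I : Type) (r : seq I) (P : pred I) (f : I -> R) :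
  (forall i, P i -> Cset s (f i)) -> Cset s (\sum_(i <- r | P i) f i).
Proof. by move=> h; apply: big_ind => [|x y|i /h]; [apply: Cset0 | apply: CsetD |]. Qed.

Lemma Dset_sub_Cset S (s : op S) : Dset s `<=` Cset s.
Proof.
move=> x Dx; exists [:: (1%:Z, x)]; rewrite big_seq1 mul1r.
by split=> // p; rewrite inE => /eqP ->.
Qed.

Lemma Cset_sub S S' (s : op S) (s' : op S') :
  Dset s' `<=` Cset s -> Cset s' `<=` Cset s.
Proof.
move=> sDC _ [l [hl ->]]; rewrite big_seq; apply: Cset_sum => p /hl Dp.
exact/CsetMz/sDC.
Qed.

Lemma Dset_tpow S n (rho : op S) : Dset (tpow n rho) `<=` Cset rho.
Proof.
move=> _ [x [y [nz ->]]]; rewrite /= -sumrB; apply: Cset_sum => i _.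
apply: Dset_sub_Cset; exists (x i), (y i); split=> // rho0.
by apply: nz; rewrite /tpow (bigD1 i) //= rho0 mul0r.
Qed.

Lemma Cset_tpow_image S Y n (rho : op S) (F : op (tens S n) -> op Y) :
  preserves_modes F -> Cset (F (tpow n rho)) `<=` Cset rho.
Proof.
by move=> mF; apply: Cset_sub => x /mF; apply: Dset_tpow.
Qed.

End Modes.

Section KrausMaps.
Variable R : realType.
Local Notation C := R[i].
Implicit Types X Y : system R.

Definition represents X Y (M : sidx Y -> sidx Y -> sidx X -> sidx X -> C)
    (F : op X -> op Y) :=
  forall sigma c d, F sigma c d = \sum_a \sum_b M c d a b * sigma a b.

Definition op_linear X Y (F : op X -> op Y) :=
  forall A B l, F (fun x y => A x y - l * B x y) = (fun c d => F A c d - l * F B c d).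

Definition positive X Y (F : op X -> op Y) := forall A, psd A -> psd (F A).

Definition trace_preserving X Y (F : op X -> op Y) :=
  forall A, \sum_c F A c c = \sum_x A x x.

Section Represented.
Variables (X Y : system R) (M : sidx Y -> sidx Y -> sidx X -> sidx X -> C).
Variable F : op X -> op Y.
Hypothesis FM : represents M F.

Lemma represents_linear : op_linear F.
Proof.
move=> A B l; apply/funext => c; apply/funext => d; rewrite !FM.
rewrite mulr_sumr -sumrB; apply: eq_bigr => a _.
by rewrite mulr_sumr -sumrB; apply: eq_bigr => b _; ring.
Qed.

Lemma represents_delta (z : C) a b c d :
  F (fun u v => z * ((u == a) && (v == b))%:R) c d = z * M c d a b.
Proof.
rewrite FM (bigD1 a) //= [X in _ + X]big1 ?addr0; last first.
  by move=> u /negbTE ua; rewrite big1 // => v _; rewrite ua /= !mulr0.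
rewrite (bigD1 b) //= [X in _ + X]big1 ?addr0; last first.
  by move=> v /negbTE vb; rewrite vb andbF /= !mulr0.
by rewrite !eqxx mulr1 mulrC.
Qed.

(* Covariance applied to the matrix unit |a><b| forces each nonzero
   coefficient M c d a b to connect equal Bohr frequencies. *)
Lemma represents_modes : covariant F -> preserves_modes F.
Proof.
move=> Fcov sigma x [c [d [/eqP + ->]]]; rewrite FM => /sum_neq0P[a _] /sum_neq0P[b _].
rewrite mulf_eq0 negb_or => /andP[Mab sab]; exists a, b; split; first exact/eqP.
apply/esym/oppr_inj/expi_freq_inj => t; rewrite !mulNr.
apply: (mulIf Mab); rewrite -represents_delta.
have := Fcov (fun u v => 1 * ((u == a) && (v == b))%:R) t.
move/(congr1 (fun G => G c d)); rewrite evolveE represents_delta mul1r => <-.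
congr (F _ c d); apply/funext => u; apply/funext => v; rewrite evolveE mul1r.
by have [/andP[/eqP-> /eqP->]|] := boolP ((u == a) && (v == b)); rewrite ?mulr0.
Qed.

End Represented.

Definition kraus (I : finType) X Y (K : I -> sidx Y -> sidx X -> C) : op X -> op Y :=
  fun sigma c d => \sum_k \sum_a \sum_b K k c a * sigma a b * (K k d b)^*.

Definition kraus_complete (I : finType) X Y (K : I -> sidx Y -> sidx X -> C) :=
  forall a b, \sum_k \sum_c (K k c a)^* * K k c b = (a == b)%:R.

Lemma channel_kraus X Y (L : op X -> op Y) : is_channel L ->
  exists m (K : 'I_m -> sidx Y -> sidx X -> C), kraus_complete K /\ L = kraus K.
Proof. by move=> [m [K [cK eL]]]; exists m, K; split=> //; apply/funext. Qed.

Section Kraus.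
Variables (I : finType) (X Y : system R) (K : I -> sidx Y -> sidx X -> C).

Lemma kraus_represents :
  represents (fun c d a b => \sum_k K k c a * (K k d b)^*) (kraus K).
Proof.
move=> sigma c d; rewrite /kraus exchange_big /=; apply: eq_bigr => a _.
rewrite exchange_big /=; apply: eq_bigr => b _; rewrite mulr_suml.
by apply: eq_bigr => k _; ring.
Qed.

Lemma kraus_positive : positive (kraus K).
Proof.
move=> A pA v; pose w k a := \sum_c (K k c a)^* * v c.
suff -> : qf v v (kraus K A) = \sum_k qf (w k) (w k) A.
  by apply: sumr_ge0 => k _; apply: pA.
transitivity (\sum_c \sum_d \sum_k \sum_a \sum_b
    (v c)^* * K k c a * A a b * ((K k d b)^* * v d)).
  apply: eq_bigr => c _; apply: eq_bigr => d _; rewrite mulr_sumr mulr_suml.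
  apply: eq_bigr => k _; rewrite mulr_sumr mulr_suml; apply: eq_bigr => a _.
  by rewrite mulr_sumr mulr_suml; apply: eq_bigr => b _; ring.
under eq_bigr => c _ do rewrite exchange_big /=.
rewrite exchange_big /=.
under eq_bigr => k _ do under eq_bigr => c _ do rewrite exchange_big /=.
under eq_bigr => k _ do rewrite exchange_big /=.
under eq_bigr => k _ do under eq_bigr => a _ do
  under eq_bigr => c _ do rewrite exchange_big /=.
under eq_bigr => k _ do under eq_bigr => a _ do rewrite exchange_big /=.
apply: eq_bigr => k _; apply: eq_bigr => a _; apply: eq_bigr => b _.
rewrite rmorph_sum /= !mulr_suml; apply: eq_bigr => c _; rewrite mulr_sumr.
by apply: eq_bigr => d _; rewrite rmorphM /= conjCK; ring.
Qed.

Lemma kraus_trace_preserving : kraus_complete K -> trace_preserving (kraus K).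
Proof.
move=> cK A.
transitivity (\sum_a \sum_b A a b * \sum_k \sum_c (K k c b)^* * K k c a).
  rewrite exchange_big /=; under eq_bigr => k _ do rewrite exchange_big /=.
  under eq_bigr => k _ do under eq_bigr => a _ do rewrite exchange_big /=.
  rewrite exchange_big /=; under eq_bigr => a _ do rewrite exchange_big /=.
  apply: eq_bigr => a _; apply: eq_bigr => b _; rewrite mulr_sumr.
  by apply: eq_bigr => k _; rewrite mulr_sumr; apply: eq_bigr => c _; ring.
apply: eq_bigr => a _; under eq_bigr => b _ do rewrite cK.
rewrite (bigD1 a) //= [X in _ + X]big1 ?addr0; first by rewrite eqxx mulr1.
by move=> b /negbTE ba; rewrite ba mulr0.
Qed.

(* Both indices of a nonzero term are shifted by the same [e k], so each term
   keeps its Bohr frequency. *)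
Lemma kraus_covariant (e : I -> R) :
  (forall k c a, K k c a != 0 -> energy a = energy c + e k) -> covariant (kraus K).
Proof.
move=> hK sigma t; apply/funext => c; apply/funext => d.
rewrite [RHS]evolveE /kraus !mulr_sumr; apply: eq_bigr => k _.
rewrite mulr_sumr; apply: eq_bigr => a _; rewrite mulr_sumr; apply: eq_bigr => b _.
rewrite evolveE; have [->|ca] := eqVneq (K k c a) 0; first by rewrite !mul0r mulr0.
have [->|db] := eqVneq (K k d b) 0; first by rewrite conjC0 !mulr0.
rewrite (hK _ _ _ ca) (hK _ _ _ db).
have -> : energy c + e k - (energy d + e k) = energy c - energy d by ring.
by ring.
Qed.

End Kraus.

Record admissible X Y (F : op X -> op Y) : Prop := Admissible {
  admissible_linear : op_linear F;
  admissible_positive : positive F;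
  admissible_trace : trace_preserving F;
  admissible_covariant : covariant F;
  admissible_modes : preserves_modes F }.

Lemma kraus_admissible (I : finType) X Y (K : I -> sidx Y -> sidx X -> C) :
  kraus_complete K -> covariant (kraus K) -> admissible (kraus K).
Proof.
move=> cK covK; have rK := @kraus_represents I X Y K; split=> //.
- exact: represents_linear rK.
- exact: kraus_positive.
- exact: kraus_trace_preserving.
- exact: represents_modes rK covK.
Qed.

Lemma channel_admissible X Y (L : op X -> op Y) :
  is_channel L -> covariant L -> admissible L.
Proof. by move=> /channel_kraus[m [K [cK ->]]]; apply: kraus_admissible. Qed.

Lemma admissible_comp X Y Z (F : op X -> op Y) (G : op Y -> op Z) :
  admissible F -> admissible G -> admissible (G \o F).
Proof.
move=> [linF posF trF covF modF] [linG posG trG covG modG]; split.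
- by move=> A B l /=; rewrite linF linG.
- by move=> A /posF /posG.
- by move=> A /=; rewrite trG trF.
- by move=> sigma t /=; rewrite covF covG.
- by move=> sigma x /modG /modF.
Qed.

End KrausMaps.

Section Marginal.
Variables (R : realType) (S : system R) (k : nat) (j : 'I_k).
Local Notation C := R[i].
Local Notation T := {ffun 'I_k -> sidx S}.
Local Notation Etot x := (@energy R (tens S k) x).
Implicit Types (x y z : T) (a b c : sidx S).

Definition upd (x : T) (a : sidx S) : T := [ffun i => if i == j then a else x i].

Lemma upd_at x a : upd x a j = a.
Proof. by rewrite ffunE eqxx. Qed.

Lemma upd_upd x a b : upd (upd x a) b = upd x b.
Proof. by apply/ffunP => i; rewrite !ffunE; case: eqP. Qed.

Lemma upd_id x : upd x (x j) = x.
Proof. by apply/ffunP => i; rewrite ffunE; case: eqP => [->|]. Qed.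

Lemma eq_upd_split x y c0 : (x == y) = (x j == y j) && (upd x c0 == upd y c0).
Proof.
apply/eqP/andP => [-> //|[/eqP xy /eqP uxy]].
by rewrite -(upd_id x) -(upd_upd x c0) uxy xy upd_upd upd_id.
Qed.

Lemma agree_upd x b y :
  (y j == b) && [forall i, (i != j) ==> (x i == y i)] = (y == upd x b).
Proof.
apply/andP/eqP => [[/eqP yb /forallP h]|->].
  apply/ffunP => i; rewrite ffunE; case: eqP => [->//|/eqP ij].
  exact/esym/eqP/(implyP (h i) ij).
split; first by rewrite upd_at.
by apply/forallP => i; apply/implyP => ij; rewrite ffunE (negbTE ij).
Qed.

Lemma upd_eqE z x c0 c :
  (z j == c0) && (x == upd z c) = (c == x j) && (z == upd x c0).
Proof.
apply/andP/andP => [[/eqP zj /eqP ->]|[/eqP -> /eqP ->]].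
  by rewrite upd_at upd_upd -zj upd_id.
by rewrite upd_at upd_upd upd_id.
Qed.

Lemma energy_upd x a : Etot (upd x a) = energy a + (Etot x - energy (x j)).
Proof.
rewrite /= (bigD1 j) //= [in RHS](bigD1 j) //= upd_at.
have -> : \sum_(i < k | i != j) energy (upd x a i) = \sum_(i < k | i != j) energy (x i).
  by apply: eq_bigr => i /negbTE ij; rewrite ffunE ij.
by ring.
Qed.

(* The partial trace over all copies but [j], as a Kraus map: the operator
   indexed by [z] (with [z j = c0]) pairs the input [x] with the output [x j]
   exactly when [x] agrees with [z] off [j]. *)
Definition marginal_kraus (c0 : sidx S) : T -> sidx S -> sidx (tens S k) -> C :=
  fun z a x => ((z j == c0) && (x == upd z a))%:R.

Lemma marginal_krausE c0 : marginal (S := S) j = kraus (marginal_kraus c0).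
Proof.
apply/funext => w; apply/funext => a; apply/funext => b.
transitivity (\sum_(z : T | z j == c0) w (upd z a) (upd z b)).
  rewrite /marginal.
  under eq_bigr => x _ do rewrite (eq_bigl _ _ (agree_upd x b)) big_pred1_eq.
  rewrite (reindex_onto (upd^~ a) (upd^~ c0)) => [|x /eqP <-]; last first.
    by rewrite upd_upd upd_id.
  apply: eq_big => [z|z _]; last by rewrite upd_upd.
  by rewrite upd_at eqxx upd_upd; apply/eqP/eqP => [<-|<-]; rewrite ?upd_at ?upd_id.
rewrite /kraus /marginal_kraus big_mkcond; apply: eq_bigr => z _.
case: (z j == c0) => /=; last first.
  by rewrite big1 // => x _; rewrite big1 // => y _; rewrite !mul0r.
under eq_bigr do under eq_bigr do rewrite conjC_nat mulrC.
by under eq_bigr do rewrite sum_delta; rewrite sum_delta.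
Qed.

Lemma marginal_kraus_complete c0 : kraus_complete (marginal_kraus c0).
Proof.
move=> x y; rewrite /marginal_kraus exchange_big /=.
under eq_bigr => c _ do under eq_bigr => z _ do
  rewrite !upd_eqE conjC_nat !natr_andb mulrACA.
under eq_bigr do rewrite -mulr_sumr.
by rewrite -mulr_suml sum_delta sum_delta -natr_andb -eq_upd_split.
Qed.

Lemma marginal_admissible (c0 : sidx S) : admissible (marginal (S := S) j).
Proof.
rewrite (marginal_krausE c0); apply: kraus_admissible.
  exact: marginal_kraus_complete.
apply: (kraus_covariant (e := fun z => Etot z - energy (z j))) => z c x.
by rewrite /marginal_kraus pnatr_eq0 eqb0 negbK => /andP[_ /eqP ->]; rewrite energy_upd.
Qed.

End Marginal.

Section Spectral.
Variable R : realType.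
Local Notation C := R[i].

Lemma hermitian_mx_spectral (k : nat) (A : 'M[C]_k) :
  (forall i j, A j i = (A i j)^*) ->
  exists (P : 'M[C]_k) (d : 'rV[C]_k),
   [/\ forall i j, A i j = \sum_l (P l i)^* * d 0 l * P l j,
       forall i j, \sum_l (P l i)^* * P l j = (i == j)%:R &
       forall l l', \sum_i P l i * (P l' i)^* = (l == l')%:R].
Proof.
move=> hA; have At : (A ^t*)%sesqui = A by apply/matrixP => i j; rewrite !mxE hA conjCK.
have nA : A \is normalmx by rewrite qualifE At.
have eA := orthomx_spectralP nA.
set P := spectralmx A in eA; set d := spectral_diag A in eA.
have uP : P \is unitarymx by apply: spectral_unitarymx.
have iP := invmx_unitary uP.
exists P, d; split.
- move=> i j; rewrite [in LHS]eA iP mul_mx_diag !mxE; apply: eq_bigr => l _.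
  by rewrite !mxE.
- move=> i j; have := mulVmx (unitarymx_unit uP); rewrite iP => /matrixP /(_ i j).
  by rewrite !mxE => <-; apply: eq_bigr => l _; rewrite !mxE.
- move=> l l'; have := unitarymxP uP => /matrixP /(_ l l').
  by rewrite !mxE => <-; apply: eq_bigr => i _; rewrite !mxE.
Qed.

Lemma hermitian_spectral (T : finType) (A : T -> T -> C) :
  (forall a b, A b a = (A a b)^*) ->
  exists m (mu : 'I_m -> C) (u : 'I_m -> T -> C),
   [/\ forall a b, A a b = \sum_l mu l * u l a * (u l b)^*,
       forall a b, ((a == b)%:R : C) = \sum_l u l a * (u l b)^* &
       forall l l', \sum_a (u l a)^* * u l' a = (l == l')%:R].
Proof.
move=> hA; pose A' : 'M[C]_#|T| := \matrix_(i, j) A (enum_val i) (enum_val j).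
have hA' : forall i j, A' j i = (A' i j)^* by move=> i j; rewrite !mxE hA.
have [P [d [eA eI eO]]] := hermitian_mx_spectral hA'.
exists _, (fun l => d 0 l), (fun l a => (P l (enum_rank a))^*); split.
- move=> a b; rewrite -[a]enum_rankK -[b]enum_rankK.
  have := eA (enum_rank a) (enum_rank b).
  rewrite !mxE => ->; apply: eq_bigr => l _; rewrite !enum_rankK conjCK; ring.
- move=> a b; rewrite -(inj_eq enum_rank_inj) -eI.
  by apply: eq_bigr => l _; rewrite conjCK.
- move=> l l'; rewrite -eO (reindex (@enum_val T predT)) /=; last first.
    exact/onW_bij/enum_val_bij.
  by apply: eq_bigr => i _; rewrite conjCK enum_valK.
Qed.

(* An eigenvector with eigenvalue 0 would lie in the kernel of [rho]. *)
Lemma full_rank_state_spectral (S : system R) (rho : op S) :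
  is_state rho -> full_rank rho ->
  exists m (mu : 'I_m -> C) (u : 'I_m -> sidx S -> C),
   [/\ forall l, 0 < mu l,
       forall a b, rho a b = \sum_l mu l * u l a * (u l b)^* &
       forall a b, ((a == b)%:R : C) = \sum_l u l a * (u l b)^*].
Proof.
move=> [herm pos _] fr; have [m [mu [u [dec idd ort]]]] := hermitian_spectral herm.
exists m, mu, u; split=> // l.
have eigen a : \sum_b rho a b * u l b = mu l * u l a.
  transitivity (\sum_j mu j * u j a * \sum_b (u j b)^* * u l b).
    under eq_bigr do rewrite dec mulr_suml.
    rewrite exchange_big; apply: eq_bigr => j _; rewrite mulr_sumr.
    by apply: eq_bigr => b _; ring.
  by under eq_bigr do rewrite ort mulrC; rewrite sum_delta.
have qfl : qf (u l) (u l) rho = mu l.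
  rewrite qfE; under eq_bigr do rewrite eigen mulrCA.
  by rewrite -mulr_sumr ort eqxx mulr1.
rewrite lt_def -qfl pos andbT qfl; apply/negP => /eqP mu0.
have ul0 : u l = (fun=> 0) by apply: fr => a; rewrite eigen mu0 mul0r.
by have := ort l l; rewrite eqxx ul0 big1 => [/esym/eqP|a _]; rewrite ?oner_eq0 ?mulr0.
Qed.

Lemma pos_lower_bound m (mu : 'I_m -> C) : (forall l, 0 < mu l) ->
  exists2 lam : C, 0 < lam & forall l, lam <= mu l.
Proof.
move=> hm; exists (\big[Order.min/1%R]_l complex.Re (mu l))%:C%C.
  rewrite ltcR; apply/bigmin_gtP; split=> // l _.
  by have := hm l; rewrite ltcE /= => /andP[].
move=> l; have := hm l; rewrite ltcE /= => /andP[/eqP hi _].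
by rewrite lecE /= -hi eqxx /=; apply: bigmin_le.
Qed.

(* If every eigenvalue of rho is at least l, then rho^{(x) n} - l^n Id expands
   in the product eigenbasis with weights prod_i mu (J i) - l^n >= 0. *)
Lemma tpow_psd_lower_bound (S : system R) n (rho : op S) :
  is_state rho -> full_rank rho ->
  exists2 lam : C, 0 < lam & psd (fun x y => tpow n rho x y - lam * id_op x y).
Proof.
move=> st fr; have [m [mu [u [hmu dec idd]]]] := full_rank_state_spectral st fr.
have [l l0 hl] := pos_lower_bound hmu.
exists (l ^+ n); first exact: exprn_gt0.
apply: (@psd_sum_rank1 _ _ {ffun 'I_n -> 'I_m} _ (fun J => \prod_i mu (J i) - l ^+ n)
          (fun J (x : sidx (tens S n)) => \prod_i u (J i) (x i))).
  move=> J; have -> : l ^+ n = \prod_(i < n) l by rewrite prodr_const card_ord.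
  rewrite subr_ge0; apply: ler_prod => i _; rewrite ltW //= hl.
move=> x y; rewrite /tpow /id_op ffun_eq_prod.
rewrite (eq_bigr _ (fun i _ => dec (x i) (y i))) (eq_bigr _ (fun i _ => idd (x i) (y i))).
rewrite !bigA_distr_bigA /= mulr_sumr -sumrB; apply: eq_bigr => J _.
by rewrite rmorph_prod /= !big_split /=; ring.
Qed.

End Spectral.

Section PureTarget.
Variable R : realType.
Local Notation C := R[i].

Section RankOne.
Variables (T : finType) (psi : T -> C) (Q : T -> T -> C).

Lemma psd_le_rank1_kernel (lam : C) : 0 < lam -> psd Q ->
  psd (fun c d => psi c * (psi d)^* - lam * Q c d) ->
  forall v, \sum_a (psi a)^* * v a = 0 -> forall w, qf w v Q = 0 /\ qf v w Q = 0.
Proof.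
move=> lam0 pQ hD v vpsi; apply: psd_kernel => //.
have rank1v : qf v v (fun c d => psi c * (psi d)^*) = 0.
  transitivity ((\sum_a (v a)^* * psi a) * \sum_b (psi b)^* * v b).
    by rewrite /qf big_distrlr; apply: eq_bigr => a _; apply: eq_bigr => b _ /=; ring.
  by rewrite vpsi mulr0.
have := hD v; rewrite qf_subZ rank1v sub0r oppr_ge0 pmulr_rle0 // => qle0.
by apply/le_anti; rewrite qle0 pQ.
Qed.

(* Testing the kernel condition against [e_a - conj (psi a) psi], which is
   orthogonal to a unit vector [psi], shows that the columns and the rows of
   [Q] are multiples of [psi] and of its conjugate. *)
Lemma kernel_rank1 : \sum_a (psi a)^* * psi a = 1 ->
  (forall v, \sum_a (psi a)^* * v a = 0 -> forall w, qf w v Q = 0 /\ qf v w Q = 0) ->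
  exists kappa, Q = fun b a => kappa * (psi b * (psi a)^*).
Proof.
move=> psi1 hker; pose r a d := ((d == a)%:R : C) - (psi a)^* * psi d.
have rperp a : \sum_d (psi d)^* * r a d = 0.
  rewrite /r; under eq_bigr do rewrite mulrBr [_ * (_ == _)%:R]mulrC mulrCA.
  by rewrite sumrB sum_delta -mulr_sumr psi1 mulr1 subrr.
have col b a : Q b a = (psi a)^* * \sum_d Q b d * psi d.
  have /eqP := (hker _ (rperp a) (fun c => (c == b)%:R)).1.
  rewrite qf_delta_l /r; under eq_bigr do rewrite mulrBr [Q b _ * _]mulrC.
  rewrite sumrB sum_delta subr_eq0 => /eqP ->; rewrite mulr_sumr.
  by apply: eq_bigr => d _; ring.
have row b d : Q b d = psi b * \sum_c (psi c)^* * Q c d.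
  have /eqP := (hker _ (rperp b) (fun c => (c == d)%:R)).2.
  rewrite qf_delta_r /r.
  under eq_bigr do rewrite rmorphB rmorphM /= conjCK conjC_nat mulrBl.
  rewrite sumrB sum_delta subr_eq0 => /eqP ->; rewrite mulr_sumr.
  by apply: eq_bigr => c _; ring.
exists (\sum_d (\sum_c (psi c)^* * Q c d) * psi d).
apply/funext => b; apply/funext => a; rewrite col mulr_suml mulr_sumr.
by apply: eq_bigr => d _; rewrite row; ring.
Qed.

End RankOne.

Lemma evolve_id (X : system R) t : evolve t (@id_op R (sidx X)) = id_op.
Proof.
apply/funext => a; apply/funext => b; rewrite evolveE /id_op.
by have [->|] := eqVneq a b; rewrite ?mulr0 // subrr mul0r oppr0 expi0 mul1r.
Qed.

Lemma admissible_pure_incoherent (X Y : system R) (F : op X -> op Y)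
    (P : op X) (rho' : op Y) (lam : C) :
  admissible F -> (0 < #|sidx X|)%N -> 0 < lam ->
  psd (fun x y => P x y - lam * id_op x y) -> F P = rho' ->
  is_pure rho' -> \sum_a rho' a a = 1 -> ~ coherent rho'.
Proof.
move=> [linF posF trF covF _] X0 lam0 hP FP [psi epsi] tr1 [t].
have psi1 : \sum_a (psi a)^* * psi a = 1.
  by rewrite -tr1 epsi; apply: eq_bigr => a _; rewrite mulrC.
pose Q := F id_op.
have hD : psd (fun c d => rho' c d - lam * Q c d) by rewrite -FP -linF; apply: posF.
have [kappa eQ] : exists kappa, Q = fun b a => kappa * rho' b a.
  rewrite epsi in hD *; apply: kernel_rank1 => //.
  by apply: (psd_le_rank1_kernel lam0) => //; apply/posF/psd_id.
have kappa0 : kappa != 0.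
  have := trF id_op; rewrite -/Q eQ -mulr_sumr tr1 mulr1 => ->.
  rewrite (eq_bigr (fun _ => 1)) => [|x _]; last by rewrite /id_op eqxx.
  by rewrite sumr_const pnatr_eq0 -lt0n.
apply; apply/funext => a; apply/funext => b; apply: (mulfI kappa0).
have := covF id_op t; rewrite evolve_id -/Q eQ => /(congr1 (fun G => G a b)).
by rewrite !evolveE mulrCA.
Qed.

End PureTarget.

Section NoTransformation.
Variable R : realType.

Lemma state_card_gt0 (S : system R) (rho : op S) : is_state rho -> (0 < #|sidx S|)%N.
Proof.
move=> [_ _ tr1]; rewrite lt0n; apply: contra_eqN tr1 => /eqP/card0_eq S0.
by rewrite big_pred0 // eq_sym oner_eq0.
Qed.

Lemma no_admissible_map (S Y : system R) n (rho : op S) (rho' : op Y)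
    (F : op (tens S n) -> op Y) :
  is_state rho -> is_state rho' ->
  ((exists x, Cset rho' x /\ ~ Cset rho x) \/
   (is_pure rho' /\ coherent rho' /\ full_rank rho)) ->
  admissible F -> F (tpow n rho) <> rho'.
Proof.
move=> st st' [[x [C'x NCx]] | [pure [coh fr]]] admF FP.
  by apply/NCx/(Cset_tpow_image (admissible_modes admF)); rewrite FP.
have [lam lam0 hP] := tpow_psd_lower_bound n st fr.
have X0 : (0 < #|sidx (tens S n)|)%N by rewrite card_ffun expn_gt0 (state_card_gt0 st).
by have [_ _ tr1] := st'; apply: (admissible_pure_incoherent admF X0 lam0 hP FP).
Qed.

End NoTransformation.

Section Rate.
Variable R : realType.
Local Notation C := R[i].

Lemma discard_channel (X Y : system R) : #|sidx Y| = 1%N ->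
  is_channel (fun (sigma : op X) (_ _ : sidx Y) => \sum_x sigma x x).
Proof.
move=> Y1; exists #|sidx X|, (fun k _ a => ((enum_val k == a)%:R : C)); split.
  move=> a b; under eq_bigr do rewrite sumr_const Y1 mulr1n conjC_nat.
  transitivity (\sum_(x : sidx X) ((x == a)%:R * (x == b)%:R : C)); last exact: sum_delta.
  by rewrite (reindex (@enum_val (sidx X) predT)) //; apply/onW_bij/enum_val_bij.
move=> sigma; apply/funext => c; apply/funext => d.
rewrite (reindex (@enum_val (sidx X) predT)) /=; last exact/onW_bij/enum_val_bij.
apply: eq_bigr => k _; symmetry.
under eq_bigr do under eq_bigr do rewrite conjC_nat mulrC ![enum_val k == _]eq_sym.
by under eq_bigr do rewrite sum_delta; rewrite sum_delta.
Qed.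

Lemma discard_covariant (X Y : system R) : #|sidx Y| = 1%N ->
  covariant (fun (sigma : op X) (_ _ : sidx Y) => \sum_x sigma x x).
Proof.
move=> Y1 sigma t; apply/funext => c; apply/funext => d.
have /card_le1_eqP Yeq : (#|sidx Y| <= 1)%N by rewrite Y1.
have -> : d = c by apply: Yeq.
rewrite evolveE subrr mul0r oppr0 expi0 mul1r.
by apply: eq_bigr => x _; rewrite evolveE subrr mul0r oppr0 expi0 mul1r.
Qed.

Lemma achievable0 (S S' : system R) (rho : op S) (rho' : op S') n :
  achievable rho rho' n 0.
Proof.
have Y1 : #|sidx (tens S' 0)| = 1%N by rewrite card_ffun card_ord expn0.
split=> //; rewrite mul0r truncn0.
by eexists; split; [exact: discard_channel | exact: discard_covariant | case].
Qed.

Lemma achievable_lt (S S' : system R) n (rho : op S) (rho' : op S') r :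
  is_state rho -> is_state rho' ->
  ((exists x, Cset rho' x /\ ~ Cset rho x) \/
   (is_pure rho' /\ coherent rho' /\ full_rank rho)) ->
  (0 < n)%N -> achievable rho rho' n r -> r < n%:R^-1.
Proof.
move=> st st' hyp n0 [r0 [L [chL covL margL]]].
rewrite -div1r ltr_pdivlMr ?ltr0n // ltNge; apply/negP => rn1.
have kpos : (0 < Num.truncn (r * n%:R))%N.
  by rewrite lt0n; apply/eqP => /truncn0Pn; rewrite rn1.
have /card_gt0P[c0 _] := state_card_gt0 st'.
pose j := Ordinal kpos.
apply: (no_admissible_map st st' hyp _ (margL j)).
exact: admissible_comp (channel_admissible chL covL) (marginal_admissible j c0).
Qed.

Lemma limn_esup_eq0_harmonic (u : (\bar R)^nat) :
  (forall n, (0 <= u n)%E) -> (forall n, (u n.+1 <= (harmonic n)%:E)%E) ->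
  limn_esup u = 0%E.
Proof.
move=> u0 uh; suff /cvg_limn_einf_sup[_ ->] : u @ \oo --> 0%E by [].
rewrite -cvg_shiftS; apply: (squeeze_cvge _ (cvg_cst 0%E) cvge_harmonic).
by apply: nearW => n /=; rewrite u0 uh.
Qed.

End Rate.

Theorem mainTheorem4 (R : realType) (S S' : system R)
    (rho : op S) (rho' : op S') :
  is_state rho -> is_state rho' ->
  ((exists x, Cset rho' x /\ ~ Cset rho x) \/
   (is_pure rho' /\ coherent rho' /\ full_rank rho)) ->
  (forall n : nat, (1 <= n)%N ->
     ~ exists L : op (tens S n) -> op S',
         [/\ is_channel L, covariant L & L (tpow n rho) = rho']) /\
  rate0 rho rho' = 0%E.
Proof.
move=> st st' hyp; split.
  move=> n _ [L [chL covL LP]].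
  exact: no_admissible_map st st' hyp (channel_admissible chL covL) LP.
apply: limn_esup_eq0_harmonic => n.
  by apply: ereal_sup_ubound; exists 0 => //; apply: achievable0.
apply: ge_ereal_sup => _ [r ach <-]; rewrite lee_fin.
exact/ltW/(achievable_lt st st' hyp _ ach).
Qed.
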